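(* Let $M_0=\mathbb A^2$ with coordinates $(x,y)$, $l_x=\{x=0\}$, $c_1=(0,0)$, and let $M_\ell\to\dots\to M_1\to M_0$ be the sequence of blow-ups where $M_j\to M_{j-1}$ blows up the point $c_j$, with $c_1=(0,0)$ and, for $j\ge2$, $c_j$ the intersection of the strict transform of $l_x$ in $M_{j-1}$ with the exceptional divisor of $M_{j-1}\to M_{j-2}$. Let $P=(m_1\ge\dots\ge m_\ell)$ be a partition of $r$ and let $X\subset M_0$ be the curve $F(x,y)=y^r+s_1(x)y^{r-1}+\dots+s_r(x)=0$, $s_\mu\in\mathbb C[x]$. The following are equivalent: (1) $X$ passes through $c_1$ with multiplicity at least $m_1$, and for $j=2,\dots,\ell$ the total transform of $X$ in $M_{j-1}$ passes through $c_j$ with multiplicity at least $m_1+\dots+m_j$; (2) for all $1\le\mu\le r$, the vanishing order of $s_\mu$ at $x=0$ is at least $\gamma_P(\mu)$; (3) $\partial_y^u\partial_x^aF(0,0)=0$ for all $(u,a)\in G(P)$.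
   Context: Level function $\gamma_P$ of a partition $P=(m_1\ge\dots\ge m_\ell)$ of $r$: number the boxes of its Young diagram (row $j$ has $m_j$ boxes) by $1,\dots,r$, top to bottom within each column, columns left to right; $\gamma_P(k)$ is the column index of box $k$. Level domain: $G(P)=\{(u,a)\in\mathbb Z^2:0\le u<r,\ 0\le a<\gamma_P(r-u)\}$. *)

From HB Require Import structures.
From mathcomp Require Import all_boot all_order all_algebra.
Set Implicit Arguments. Unset Strict Implicit. Unset Printing Implicit Defensive.
Import Order.TTheory GRing.Theory Num.Theory.

(* Bivariate polynomials: F : {poly {poly C}}; the OUTER variable is y,
   the INNER variable is x.  So F`_i is the coefficient of y^i, a
   polynomial in x, and (F`_i)`_k is the coefficient of x^k y^i. *)

Definition is_partition (P : seq nat) (r : nat) : Prop :=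
  [/\ sorted geq P, all (fun m => 0 < m) P & sumn P = r].

(* height of column c (1-based) of the Young diagram: #{ j | m_j >= c } *)
Definition col_height (P : seq nat) (c : nat) : nat := count (fun m => c <= m) P.

(* the column indices of the boxes, listed in the box numbering order
   (columns left to right, top to bottom within each column) *)
Definition box_columns (P : seq nat) : seq nat :=
  flatten [seq nseq (col_height P c) c | c <- iota 1 (foldr maxn 0 P)].

(* level function: gamma_P(k) = column index of box number k (1 <= k <= r) *)
Definition gamma (P : seq nat) (k : nat) : nat := nth 0 (box_columns P) k.-1.

Local Open Scope ring_scope.
Section Bivariate.
Variable C : fieldType.

Definition curve_poly (r : nat) (s : nat -> {poly C}) : {poly {poly C}} :=
  'X^r + \sum_(1 <= mu < r.+1) (s mu)%:P * 'X^(r - mu).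

Definition pderiv_at0 (F : {poly {poly C}}) (u a : nat) : C :=
  ((map_poly (fun p : {poly C} => p^`(a)) (F^`(u))).[0]).[0].

Definition ord0_ge (s : {poly C}) (n : nat) : Prop := forall i, (i < n)%N -> s`_i = 0.

Definition mult0_ge (G : {poly {poly C}}) (m : nat) : Prop :=
  forall i k, (i + k < m)%N -> (G`_i)`_k = 0.

(* Local equation of the total transform of {F = 0} in M_{j-1}, in the affine
   chart centred at c_j containing the strict transform of l_x and the last
   exceptional divisor: coordinates (x', y) with x = x' * y^(j-1).
   Result: outer variable y, inner variable x'. *)
Definition chart_pullback (j : nat) (F : {poly {poly C}}) : {poly {poly C}} :=
  \sum_(i < size F)
     ((map_poly (fun c : C => c%:P%:P) F`_i).[('X : {poly C})%:P * 'X^(j.-1)]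
        * 'X^i).
End Bivariate.

From mathcomp Require Import all_boot all_order all_algebra.
From mathcomp Require Import zify.
Set Implicit Arguments. Unset Strict Implicit. Unset Printing Implicit Defensive.
Import GRing.Theory Num.Theory.

(* Write b(a) for the number of boxes in the first a columns of the Young
   diagram of P.  Box k lies in a column > a exactly when b(a) < k, so
   (u, a) lies in the level domain G(P) iff u + b(a) < r; each of the three
   conditions says that the coefficient of x^a y^u in F vanishes there.
   For (3), derivatives at the origin are coefficients times factorials.
   For (2), the coefficient of y^u is s_(r-u).  For (1), the chart
   x = x' y^(j-1) sends x^a y^u to x'^a y^(u + a(j-1)), so the multiplicity
   conditions ask that u + a j < m_1 + ... + m_j for some j; as P is
   decreasing, the best j is the number of parts exceeding a, for which
   m_1 + ... + m_j - a j = r - b(a). *)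

Definition box_count (P : seq nat) (k : nat) : nat :=
  sumn [seq minn k m | m <- P].

Lemma box_countS P k : box_count P k.+1 = box_count P k + col_height P k.+1.
Proof.
rewrite /box_count /col_height; elim: P => //= m P ->.
by case: (leqP k.+1 m) => /=; lia.
Qed.

Lemma box_count_id P k : all (fun m => m <= k) P -> box_count P k = sumn P.
Proof.
by rewrite /box_count; elim: P => //= m P IH /andP[/minn_idPr -> /IH ->].
Qed.

Lemma leq_box_count P k : box_count P k <= sumn P.
Proof.
by rewrite /box_count; elim: P => //= m P IH; rewrite leq_add ?geq_minr.
Qed.

Lemma leq_sumn_take P k j : sumn (take j P) + box_count P k <= k * j + sumn P.
Proof.
elim: P j => [|m P IH] [|j] //; first by rewrite muln0 leq_box_count.
have := IH j; rewrite /box_count /=; lia.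
Qed.

Lemma sumn_take_count_gt P k : sorted geq P ->
  let j := count (fun m => k < m) P in
  sumn (take j P) + box_count P k = k * j + sumn P.
Proof.
elim: P => [|m P IH] mP /=; first by rewrite muln0.
case: ltnP => [km | mk] /=.
  have := IH (path_sorted mP); rewrite /box_count /= add0n; lia.
have /allP Pm := order_path_min (rev_trans leq_trans) mP.
have -> : count (fun m' => k < m') P = 0.
  apply/eqP; rewrite -leqn0 leqNgt -has_count; apply/hasPn => m' /Pm m'm.
  by rewrite -leqNgt (leq_trans m'm).
rewrite muln0 box_count_id //=; apply/andP; split=> //.
by apply/allP => m' /Pm /leq_trans; apply.
Qed.

Lemma exists_take_gtP P k i : sorted geq P ->
  (exists2 j, 0 < j <= size P & i + k * j < sumn (take j P)) <->
  i + box_count P k < sumn P.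
Proof.
move=> sP; split=> [[j _] | lt_ik].
  by have := leq_sumn_take P k j; lia.
have /= := sumn_take_count_gt k sP; set j := count _ P => eq_j.
exists j; last by lia.
rewrite count_size andbT lt0n; apply/eqP => j0.
by move: eq_j; rewrite j0 take0 /=; lia.
Qed.

Definition col_boxes (P : seq nat) (a n : nat) : seq nat :=
  flatten [seq nseq (col_height P c) c | c <- iota a n].

Lemma mem_col_boxes P a n c : c \in col_boxes P a n -> a <= c < a + n.
Proof.
by move/flatten_mapP => [c']; rewrite mem_iota mem_nseq => ? /andP[_ /eqP ->].
Qed.

Lemma col_boxesD P a n1 n2 :
  col_boxes P a (n1 + n2) = col_boxes P a n1 ++ col_boxes P (a + n1) n2.
Proof. by rewrite /col_boxes iotaD map_cat flatten_cat. Qed.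

Lemma size_col_boxes P n : size (col_boxes P 1 n) = box_count P n.
Proof.
elim: n => [|n IH].
  by rewrite /box_count; elim: P => //= m P; rewrite min0n.
rewrite -[n.+1]addn1 col_boxesD size_cat IH /col_boxes /= cats0 size_nseq.
by rewrite addn1 add1n box_countS.
Qed.

Lemma leq_foldr_maxn (P : seq nat) m : m \in P -> m <= foldr maxn 0 P.
Proof.
by rewrite foldrE => mP; exact: (@leq_bigmax_seq _ P xpredT id m mP).
Qed.

Lemma col_height_out P c : foldr maxn 0 P < c -> col_height P c = 0.
Proof.
move=> Pc; apply/eqP; rewrite -leqn0 leqNgt -has_count; apply/hasPn => m.
by move/leq_foldr_maxn/leq_ltn_trans/(_ Pc); rewrite ltnNge.
Qed.

Lemma col_boxes_out P a n : foldr maxn 0 P < a -> col_boxes P a n = [::].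
Proof.
rewrite /col_boxes; elim: n a => //= n IH a Pa.
by rewrite col_height_out // IH // leqW.
Qed.

Lemma box_columns_split P k :
  box_columns P = col_boxes P 1 k ++ col_boxes P k.+1 (foldr maxn 0 P).
Proof.
have -> : box_columns P = col_boxes P 1 (foldr maxn 0 P + k).
  by rewrite col_boxesD (@col_boxes_out P _ k) ?cats0 // add1n.
by rewrite addnC col_boxesD add1n.
Qed.

Lemma size_box_columns P : size (box_columns P) = sumn P.
Proof.
rewrite -[box_columns P]/(col_boxes P 1 _) size_col_boxes box_count_id //.
by apply/allP => m /leq_foldr_maxn.
Qed.

Lemma ltn_gamma P k mu : 0 < mu <= sumn P ->
  (k < gamma P mu) = (box_count P k < mu).
Proof.
case: mu => // mu /= muP; have := size_box_columns P.
rewrite /gamma (box_columns_split P k) nth_cat size_cat size_col_boxes succnK.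
case: (ltnP mu (box_count P k)) => [lt_mu | le_mu] size_eq.
  have : nth 0 (col_boxes P 1 k) mu \in col_boxes P 1 k.
    by rewrite mem_nth // size_col_boxes.
  by move/mem_col_boxes; lia.
have : nth 0 (col_boxes P k.+1 (foldr maxn 0 P)) (mu - box_count P k)
    \in col_boxes P k.+1 (foldr maxn 0 P).
  by rewrite mem_nth // ltn_subLR // size_eq.
by move/mem_col_boxes; lia.
Qed.

Definition level_domain (P : seq nat) (u a : nat) : bool :=
  (u < sumn P) && (a < gamma P (sumn P - u)).

Lemma level_domainE P u a : level_domain P u a = (u + box_count P a < sumn P).
Proof.
rewrite /level_domain; case: ltnP => [uP | Pu] /=; last by lia.
by rewrite ltn_gamma; lia.
Qed.

Local Open Scope ring_scope.

Definition vanishes_on_level_domain {R : nzSemiRingType} (P : seq nat)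
    (F : {poly {poly R}}) : Prop :=
  forall u a, level_domain P u a -> (F`_u)`_a = 0.

Lemma pderiv_at0E (C : fieldType) (F : {poly {poly C}}) u a :
  pderiv_at0 F u a = (F`_u)`_a *+ u`! *+ a`!.
Proof.
rewrite /pderiv_at0 !horner_coef0 coef_map_id0 ?raddf0 //.
by rewrite coef_derivn addn0 coef_derivn addn0 coefMn !ffactnn -!mulrnA mulnC.
Qed.

Lemma pderiv_at0_eq0 (C : numFieldType) (F : {poly {poly C}}) u a :
  (pderiv_at0 F u a == 0) = ((F`_u)`_a == 0).
Proof.
by rewrite pderiv_at0E !mulrn_eq0 !(negbTE (lt0n_neq0 (fact_gt0 _))).
Qed.

Lemma coef_curve_poly (C : fieldType) r s i : (i < r)%N ->
  (curve_poly r s)`_i = s (r - i)%N :> {poly C}.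
Proof.
move=> ir; rewrite /curve_poly coefD coefXn (ltn_eqF ir) add0r coef_sum.
under eq_big_nat => mu /andP[mu_gt0 mu_le].
  rewrite coefCM coefXn (_ : (i == r - mu)%N = (mu == r - i)%N).
    by rewrite mulr_natr mulrb; over.
  by apply/eqP/eqP; lia.
by rewrite -big_mkcond big_nat1_eq; case: ifP => //; lia.
Qed.

Lemma coef2_monomial (R : nzSemiRingType) (c : R) a b n k :
  ((((c%:P * 'X^a)%:P * 'X^b) : {poly {poly R}})`_n)`_k =
  if (n == b) && (a == k) then c else 0.
Proof.
rewrite coefCM coefXn mulr_natr mulrb.
by case: (n == b); rewrite ?coef0 // coefCM coefXn mulr_natr mulrb eq_sym.
Qed.

Lemma coef_chart_pullback (C : fieldType) j (F : {poly {poly C}}) n k :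
  ((chart_pullback j F)`_n)`_k =
  if (k * j.-1 <= n)%N then (F`_(n - k * j.-1))`_k else 0.
Proof.
have coef_term (p : {poly C}) i :
    (((map_poly (fun c : C => c%:P%:P) p).[('X : {poly C})%:P * 'X^(j.-1)]
        * 'X^i)`_n)`_k = if (n == i + k * j.-1)%N then p`_k else 0.
  rewrite horner_coef size_map_inj_poly; last 2 first.
  - exact: (inj_comp (@polyC_inj _) (@polyC_inj _)).
  - by [].
  rewrite mulr_suml coef_sum coef_sum.
  under eq_bigr => t _.
    rewrite coef_map_id0 // exprMn -rmorphXn -exprM mulrA -rmorphM -mulrA.
    rewrite -exprD.
    rewrite coef2_monomial mulnC addnC.
    over.
  rewrite -big_mkcond.
  rewrite (big_ord1_cond_eq _ (fun t => p`_t) (fun t => n == i + t * j.-1)%N).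
  by case: ltnP => //= /(nth_default 0) ->; case: ifP.
rewrite /chart_pullback coef_sum coef_sum.
under eq_bigr => i _.
  rewrite coef_term (_ : (n == i + k * j.-1)%N =
                         (k * j.-1 <= n)%N && (i == n - k * j.-1 :> nat)%N).
    over.
  by apply/eqP/andP => [|[/eqP]]; lia.
rewrite -big_mkcond.
rewrite (big_ord1_cond_eq _ (fun t => F`_t`_k) (fun _ => k * j.-1 <= n)%N).
by case: ltnP => //= /(nth_default 0) ->; case: ifP; rewrite ?coef0.
Qed.

Lemma pderiv_at0_level_domainP (C : numFieldType) P (F : {poly {poly C}}) :
  (forall u a, (u < sumn P)%N -> (a < gamma P (sumn P - u))%N ->
     pderiv_at0 F u a = 0) <-> vanishes_on_level_domain P F.
Proof.
split=> [h u a /andP[uP aP] | h u a uP aP].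
  by apply/eqP; rewrite -pderiv_at0_eq0 h.
by apply/eqP; rewrite pderiv_at0_eq0 h // /level_domain uP.
Qed.

Lemma ord0_ge_curve_polyP (C : fieldType) P (s : nat -> {poly C}) :
  (forall mu, (1 <= mu <= sumn P)%N -> ord0_ge (s mu) (gamma P mu)) <->
  vanishes_on_level_domain P (curve_poly (sumn P) s).
Proof.
split=> [h u a /andP[uP aP] | h mu mu_bd a a_lt].
  by rewrite coef_curve_poly // h //; lia.
have := h (sumn P - mu)%N a; rewrite coef_curve_poly; last by lia.
rewrite (_ : (sumn P - (sumn P - mu))%N = mu); last by lia.
by apply; rewrite level_domainE; move: a_lt; rewrite ltn_gamma; lia.
Qed.

Lemma mult0_ge_chart_pullbackP (C : fieldType) P (F : {poly {poly C}}) :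
  sorted geq P ->
  (forall j, (1 <= j <= size P)%N ->
     mult0_ge (chart_pullback j F) (sumn (take j P))) <->
  vanishes_on_level_domain P F.
Proof.
move=> sP; split=> [h u a | h j j_bd n a lt_na].
  rewrite level_domainE => /(exists_take_gtP a u sP)[j j_bd lt_ua].
  have := h j j_bd (u + a * j.-1)%N a.
  rewrite coef_chart_pullback leq_addl addnK; apply.
  by case: j j_bd lt_ua => //= j _; rewrite mulnS; lia.
rewrite coef_chart_pullback; case: ifP => // le_an; apply: h.
rewrite level_domainE; apply/(exists_take_gtP _ _ sP); exists j => //.
by case: j j_bd le_an lt_na => //= j _; rewrite mulnS; lia.
Qed.

Theorem mainTheorem18 (C : numClosedFieldType) (r : nat) (P : seq nat)
    (s : nat -> {poly C}) :
  is_partition P r ->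
  let F := curve_poly r s in
  [<-> (forall j, (1 <= j <= size P)%N ->
          mult0_ge (chart_pullback j F) (sumn (take j P)));
       (forall mu, (1 <= mu <= r)%N -> ord0_ge (s mu) (gamma P mu));
       (forall u a, (u < r)%N -> (a < gamma P (r - u))%N ->
          pderiv_at0 F u a = 0)].
Proof.
move=> [sP _ <-] F.
have E1 := mult0_ge_chart_pullbackP F sP.
have E2 := ord0_ge_curve_polyP P s.
have E3 := pderiv_at0_level_domainP P F.
by tfae=> [/E1/E2 | /E2/E3 | /E3/E1].
Qed.
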